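(* There exists an online Fisher market instance (a number of goods $m$, a per-user capacity vector $\mathbf{d}>\mathbf{0}$ with capacities $\mathbf{c}=n\mathbf{d}$, and a distribution $\mathcal{D}$ of budget–utility pairs) such that, for every static pricing algorithm $\boldsymbol{\pi}$ (i.e., one that posts the same price vector $\mathbf{p}^t=\mathbf{p}$ to all users $t\in[n]$), either the expected regret $R_n(\boldsymbol{\pi})$ or the expected constraint violation $V_n(\boldsymbol{\pi})$ is $\Omega(\sqrt{n})$, where $n$ is the number of arriving users.
   Context: Online Fisher market: there are $m$ divisible goods, good $j$ having capacity $c_j=nd_j$ with $d_j>0$, and $n$ users arriving sequentially. User $t$ has a budget $w_t>0$ and a utility vector $\mathbf{u}_t\in\mathbb{R}^m_{\ge 0}$, and the pairs $(w_t,\mathbf{u}_t)$ are drawn i.i.d. from a distribution $\mathcal{D}$ with bounded support. Given a posted price vector $\mathbf{p}^t$, user $t$ consumes a bundle $\mathbf{x}_t$ that is an optimal solution of $\max_{\mathbf{x}\in\mathbb{R}^m}\ \mathbf{u}_t^\top\mathbf{x}$ subject to $(\mathbf{p}^t)^\top\mathbf{x}\le w_t$, $\mathbf{x}\ge\mathbf{0}$. A pricing policy $\boldsymbol{\pi}$ chooses $\mathbf{p}^t$ for each user. The offline optimum is $U_n^*=\max\{\sum_{t=1}^n w_t\log(\sum_{j}u_{tj}x_{tj}) : \sum_{t}x_{tj}\le c_j\ \forall j,\ x_{tj}\ge 0\}$ (Eisenberg–Gale program), the online objective is $U_n(\boldsymbol{\pi})=\sum_{t=1}^n w_t\log(\mathbf{u}_t^\top\mathbf{x}_t)$,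 the expected regret is $R_n(\boldsymbol{\pi})=\mathbb{E}[U_n^*-U_n(\boldsymbol{\pi})]$ and the expected constraint violation is $V_n(\boldsymbol{\pi})=\mathbb{E}[\|(\sum_{t=1}^n\mathbf{x}_t-\mathbf{c})_+\|_2]$, expectations over $\mathcal{D}$. Asymptotic notation refers to $n\to\infty$ with the instance parameters $m,\mathbf{d},\mathcal{D}$ fixed. *)

From HB Require Import structures.
From mathcomp Require Import all_boot all_order all_algebra.
From mathcomp Require Import all_classical all_reals all_analysis.
Set Implicit Arguments. Unset Strict Implicit. Unset Printing Implicit Defensive.
Import Order.TTheory GRing.Theory Num.Theory.
Local Open Scope ring_scope.
Local Open Scope classical_set_scope.

Section FisherDefs.
Variable R : realType.

Definition optimal_bundle (m : nat) (p : 'I_m -> R) (w : R) (u : 'I_m -> R)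
  (x : 'I_m -> R) : Prop :=
  (forall j, 0 <= x j) /\ \sum_j p j * x j <= w /\
  (forall y : 'I_m -> R, (forall j, 0 <= y j) -> \sum_j p j * y j <= w ->
     \sum_j u j * y j <= \sum_j u j * x j).

Definition EG_opt (m n : nat) (d : 'I_m -> R) (wt : 'I_n -> R)
  (ut : 'I_n -> 'I_m -> R) : R :=
  sup [set v : R | exists X : 'I_n -> 'I_m -> R,
     (forall t j, 0 <= X t j) /\
     (forall j, \sum_t X t j <= n%:R * d j) /\
     (forall t, 0 < \sum_j ut t j * X t j) /\
     v = \sum_t wt t * ln (\sum_j ut t j * X t j)].

Definition iid_expect (K : finType) (prob : K -> R) (n : nat)
  (f : {ffun 'I_n -> K} -> R) : R :=
  \sum_(s : {ffun 'I_n -> K}) (\prod_t prob (s t)) * f s.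

(* Expected regret R_n of the policy posting price p to all n users, where
   user t of type k consumes the bundle x t k. *)
Definition exp_regret (m : nat) (d : 'I_m -> R) (K : finType) (prob : K -> R)
  (w : K -> R) (u : K -> 'I_m -> R) (n : nat) (x : 'I_n -> K -> 'I_m -> R) : R :=
  iid_expect prob (fun s =>
    EG_opt d (fun t => w (s t)) (fun t => u (s t)) -
    \sum_t w (s t) * ln (\sum_j u (s t) j * x t (s t) j)).

Definition exp_violation (m : nat) (d : 'I_m -> R) (K : finType) (prob : K -> R)
  (n : nat) (x : 'I_n -> K -> 'I_m -> R) : R :=
  iid_expect prob (fun s =>
    Num.sqrt (\sum_j (Num.max 0 (\sum_t x t (s t) j - n%:R * d j)) ^+ 2)).

End FisherDefs.

From HB Require Import structures.
From mathcomp Require Import all_boot all_order all_algebra.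
From mathcomp Require Import all_classical all_reals all_analysis.
From mathcomp Require Import ring lra.
Import Order.TTheory GRing.Theory Num.Theory.
Local Open Scope ring_scope.

Set Implicit Arguments. Unset Strict Implicit.

(* One good of capacity n, users with utility 1 whose budget is 2 or 1 with probability 1/2
   each.  The total budget of n users is W = 3n/2 + Y, where Y is a sum of n independent
   steps +-1/2, and under a static price P every user spends the whole budget on the good,
   so the demand is W/P.  If nP exceeds 3n/2 by more than sqrt n / 64, the proportional
   allocation beats the posted price by W ln(nP/W) >= W (1 - W/(nP)), whose expectation is
   of order sqrt n.  Otherwise the demand overshoots the capacity by at least
   (Y - sqrt n / 64)_+ / P, and E|Y| >= sqrt n / 16 makes the expected violation of order
   sqrt n. *)

Section IidExpectation.
Variables (R : realType) (K : finType) (prob : K -> R).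

Definition ffun_cons n (k : K) (s : {ffun 'I_n -> K}) : {ffun 'I_n.+1 -> K} :=
  [ffun i => if unlift ord0 i is Some j then s j else k].

Lemma ffun_cons0 n k (s : {ffun 'I_n -> K}) : ffun_cons k s ord0 = k.
Proof. by rewrite ffunE unlift_none. Qed.

Lemma ffun_consS n k (s : {ffun 'I_n -> K}) j : ffun_cons k s (lift ord0 j) = s j.
Proof. by rewrite ffunE liftK. Qed.

Lemma big_ffun_ordS n (F : {ffun 'I_n.+1 -> K} -> R) :
  \sum_s F s = \sum_k \sum_(s : {ffun 'I_n -> K}) F (ffun_cons k s).
Proof.
rewrite pair_big /= (reindex (fun ks : K * {ffun 'I_n -> K} => ffun_cons ks.1 ks.2)) //=.
exists (fun s : {ffun 'I_n.+1 -> K} => (s ord0, [ffun j => s (lift ord0 j)])).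
  move=> [k s] _ /=; rewrite ffun_cons0; congr pair; apply/ffunP => j.
  by rewrite ffunE ffun_consS.
move=> s _; apply/ffunP => i; rewrite ffunE.
by case: unliftP => [j ->|->] //; rewrite ffunE.
Qed.

Lemma iid_expectS n (c : K -> R) (G : R -> R) :
  iid_expect prob (n := n.+1) (fun s => G (\sum_t c (s t))) =
  \sum_k prob k * iid_expect prob (n := n) (fun s => G (c k + \sum_t c (s t))).
Proof.
rewrite /iid_expect big_ffun_ordS; apply: eq_bigr => k _.
rewrite mulr_sumr; apply: eq_bigr => s _.
rewrite !big_ord_recl ffun_cons0 mulrA.
by congr (_ * _ * G (_ + _)); apply: eq_bigr => i _; rewrite ffun_consS.
Qed.

Lemma eq_iid_expect n (f g : {ffun 'I_n -> K} -> R) :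
  f =1 g -> iid_expect prob f = iid_expect prob g.
Proof. by move=> fg; apply: eq_bigr => s _; rewrite fg. Qed.

Lemma iid_expectD n (f g : {ffun 'I_n -> K} -> R) :
  iid_expect prob (fun s => f s + g s) = iid_expect prob f + iid_expect prob g.
Proof. by rewrite /iid_expect -big_split; apply: eq_bigr => s _; rewrite mulrDr. Qed.

Lemma iid_expectZ n a (f : {ffun 'I_n -> K} -> R) :
  iid_expect prob (fun s => a * f s) = a * iid_expect prob f.
Proof. by rewrite /iid_expect mulr_sumr; apply: eq_bigr => s _; rewrite mulrCA. Qed.

Hypothesis prob_ge0 : forall k, 0 <= prob k.
Hypothesis prob_sum1 : \sum_k prob k = 1.

Lemma iid_expect_cst n a : iid_expect prob (n := n) (fun => a) = a.
Proof.
rewrite /iid_expect -mulr_suml -(bigA_distr_bigA (fun (_ : 'I_n) k => prob k)) /=.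
by rewrite prob_sum1 big1 ?mul1r.
Qed.

Lemma ler_iid_expect n (f g : {ffun 'I_n -> K} -> R) :
  (forall s, f s <= g s) -> iid_expect prob f <= iid_expect prob g.
Proof.
move=> fg; apply: ler_sum => s _; apply: ler_wpM2l (fg s).
by apply: prodr_ge0 => t _.
Qed.

End IidExpectation.

Lemma ln_le_subr1 (R : realType) {z : R} : 0 < z -> ln z <= z - 1.
Proof. by move=> z_gt0; have := @le_ln1Dx R (z - 1); rewrite addrCA subrr addr0; apply; lra. Qed.

Lemma ln_ge_subrV (R : realType) {z : R} : 0 < z -> 1 - z^-1 <= ln z.
Proof.
move=> z_gt0; have /ln_le_subr1 : 0 < z^-1 by rewrite invr_gt0.
by rewrite lnV ?posrE //; lra.
Qed.

Lemma sqr_le_norm_quart (R : realFieldType) (s y : R) :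
  0 < s -> y ^+ 2 <= s * `|y| + y ^+ 4 / s ^+ 2.
Proof.
move=> s_gt0; have y4 : y ^+ 4 = `|y| ^+ 2 * `|y| ^+ 2.
  by rewrite real_normK ?num_real // -exprD.
rewrite -real_normK ?num_real // y4; have := normr_ge0 y; set a := `|y| => a_ge0.
have s2_gt0 : 0 < s ^+ 2 by rewrite exprn_gt0.
case: (lerP a s) => [a_le_s | s_lt_a].
- have : 0 <= a ^+ 2 * a ^+ 2 / s ^+ 2 by apply/divr_ge0/ltW; rewrite ?mulr_ge0 ?sqr_ge0.
  have : a ^+ 2 <= s * a by rewrite expr2 ler_wpM2r.
  lra.
- have : a ^+ 2 <= a ^+ 2 * a ^+ 2 / s ^+ 2.
    rewrite -mulrA ler_peMr ?sqr_ge0 // ler_pdivlMr // mul1r.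
    by rewrite !expr2; apply: ler_pM; rewrite ?ltW.
  have := mulr_ge0 (ltW s_gt0) a_ge0.
  lra.
Qed.

Section FairWalk.
Context {R : realType}.

Definition fair_coin (b : bool) : R := 1 / 2.

Definition half_step (b : bool) : R := if b then 1 / 2 else - (1 / 2).

Definition walk {n} (s : {ffun 'I_n -> bool}) : R := \sum_t half_step (s t).

Lemma fair_coin_ge0 b : 0 <= fair_coin b.
Proof. by rewrite /fair_coin; lra. Qed.

Lemma fair_coin_sum1 : \sum_b fair_coin b = 1.
Proof. by rewrite big_bool /fair_coin /=; lra. Qed.

Lemma iid_expect_walkS n (G : R -> R) :
  iid_expect fair_coin (n := n.+1) (fun s => G (walk s)) =
  iid_expect fair_coin (n := n) (fun s => (G (1 / 2 + walk s) + G (- (1 / 2) + walk s)) / 2).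
Proof.
rewrite /walk iid_expectS big_bool /= -!iid_expectZ -iid_expectD.
by apply: eq_iid_expect => s; rewrite /fair_coin /=; lra.
Qed.

Lemma iid_expect_walk0 (G : R -> R) :
  iid_expect fair_coin (n := 0) (fun s => G (walk s)) = G 0.
Proof.
rewrite -(iid_expect_cst fair_coin_sum1 0 (G 0)).
by apply: eq_iid_expect => s; rewrite /walk big_ord0.
Qed.

Lemma iid_expect_walk n : iid_expect fair_coin (n := n) walk = 0.
Proof.
elim: n => [|n IH]; first exact: (iid_expect_walk0 id).
by rewrite (iid_expect_walkS n id) -IH; apply: eq_iid_expect => s /=; lra.
Qed.

Lemma iid_expect_walk2 n : iid_expect fair_coin (n := n) (fun s => walk s ^+ 2) = n%:R / 4.
Proof.
elim: n => [|n IH]; first by rewrite (iid_expect_walk0 (fun y => y ^+ 2)) expr0n mul0r.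
rewrite (iid_expect_walkS n (fun y => y ^+ 2)).
rewrite (eq_iid_expect fair_coin (g := fun s => 1 / 4 + walk s ^+ 2)) => [|s].
  by rewrite iid_expectD (iid_expect_cst fair_coin_sum1) IH -[n.+1%:R]natr1; lra.
by rewrite /=; lra.
Qed.

Lemma iid_expect_walk4 n :
  iid_expect fair_coin (n := n) (fun s => walk s ^+ 4) = (3 * n%:R ^+ 2 - 2 * n%:R) / 16.
Proof.
elim: n => [|n IH]; first by rewrite (iid_expect_walk0 (fun y => y ^+ 4)) !expr0n /=; lra.
rewrite (iid_expect_walkS n (fun y => y ^+ 4)).
rewrite (eq_iid_expect fair_coin
  (g := fun s => 1 / 16 + 3 / 2 * walk s ^+ 2 + walk s ^+ 4)) => [|s].
  rewrite !iid_expectD (iid_expect_cst fair_coin_sum1) iid_expectZ iid_expect_walk2 IH.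
  by rewrite -[n.+1%:R]natr1; field.
by rewrite /=; lra.
Qed.

(* Expectation of [sqr_le_norm_quart] at [s = sqrt n]: n/4 <= sqrt n E|Y| + (3n - 2)/16. *)
Lemma iid_expect_norm_walk_ge n : (0 < n)%N ->
  Num.sqrt n%:R / 16 <= iid_expect fair_coin (n := n) (fun s => `|walk s|).
Proof.
move=> n_gt0; set sq := Num.sqrt n%:R; set e := iid_expect _ _.
have nR_gt0 : (0 : R) < n%:R by rewrite ltr0n.
have sq_gt0 : 0 < sq by rewrite sqrtr_gt0.
have sqK : sq ^+ 2 = n%:R by rewrite sqr_sqrtr // ler0n.
have : iid_expect fair_coin (n := n) (fun s => walk s ^+ 2) <=
       iid_expect fair_coin (n := n) (fun s => sq * `|walk s| + (sq ^+ 2)^-1 * walk s ^+ 4).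
  by apply: (ler_iid_expect fair_coin_ge0) => s; rewrite [_^-1 * _]mulrC sqr_le_norm_quart.
rewrite iid_expectD !iid_expectZ iid_expect_walk2 iid_expect_walk4 -/e sqK.
have -> : (n%:R)^-1 * ((3 * n%:R ^+ 2 - 2 * n%:R) / 16) = (3 * n%:R - 2) / 16 :> R.
  by field; rewrite gt_eqF.
rewrite -(ler_pM2l sq_gt0) mulrA -expr2 sqK; lra.
Qed.

End FairWalk.

Section SingleGood.
Variable R : realType.

Lemma optimal_bundle_single (p x : 'I_1 -> R) (w : R) :
  0 < w -> optimal_bundle p w (fun => 1) x -> 0 < p ord0 /\ x ord0 = w / p ord0.
Proof.
rewrite /optimal_bundle !big_ord1 => w_gt0 [x_ge0 [budget_x x_opt]].
have x0_ge0 := x_ge0 ord0.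
have p_gt0 : 0 < p ord0.
  rewrite ltNge; apply/negP => p_le0.
  have := x_opt (fun => x ord0 + 1); rewrite !big_ord1 !mul1r.
  have -> : p ord0 * (x ord0 + 1) <= w by rewrite mulrDr mulr1; lra.
  by move=> /(_ (fun => ltW (ltr_pwDr ltr01 x0_ge0)) isT); lra.
split=> //; apply/eqP; rewrite eq_le ler_pdivlMr // mulrC budget_x /=.
have := x_opt (fun => w / p ord0); rewrite !big_ord1 !mul1r; apply.
  by move=> _; rewrite divr_ge0 ?ltW.
by rewrite mulrC divfK ?gt_eqF.
Qed.

Lemma EG_opt_single_ge n (wt : 'I_n -> R) : (0 < n)%N -> (forall t, 0 < wt t) ->
  \sum_t wt t * ln (n%:R * wt t / \sum_t' wt t') <=
  EG_opt (fun => 1) wt (fun _ (_ : 'I_1) => 1).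
Proof.
move=> n_gt0 wt_gt0; set W := \sum_t' wt t'.
have wt_le_W t : wt t <= W.
  by rewrite /W (bigD1 t) //= lerDl sumr_ge0 // => t' _; rewrite ltW.
have W_gt0 : 0 < W := lt_le_trans (wt_gt0 (Ordinal n_gt0)) (wt_le_W _).
rewrite /EG_opt; set S := (X in sup X).
have S_prop : S (\sum_t wt t * ln (n%:R * wt t / W)).
  exists (fun t _ => n%:R * wt t / W); split; [|split; [|split]].
  - by move=> t _; rewrite divr_ge0 ?mulr_ge0 ?ler0n ?ltW.
  - by move=> _; rewrite mulr1 -mulr_suml -mulr_sumr mulfK ?gt_eqF.
  - by move=> t; rewrite big_ord1 mul1r divr_gt0 ?mulr_gt0 ?ltr0n.
  - by apply: eq_bigr => t _; rewrite big_ord1 mul1r.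
apply: sup_upper_bound (S_prop); split; first by eexists; exact: S_prop.
exists (W * n%:R) => _ [X [X_ge0 [X_cap [X_pos ->]]]].
apply: le_trans (_ : \sum_t W * X t ord0 <= _); last first.
  by rewrite -mulr_sumr ler_wpM2l ?(ltW W_gt0) // -(mulr1 n%:R) X_cap.
apply: ler_sum => t _; move: (X_pos t); rewrite big_ord1 mul1r => X_gt0.
apply: le_trans (_ : wt t * X t ord0 <= _); last by rewrite ler_wpM2r ?X_ge0.
by rewrite ler_wpM2l ?ltW //; have := ln_le_subr1 X_gt0; lra.
Qed.

End SingleGood.

Section StaticPrice.
Variables (R : realType) (K : finType) (prob : K -> R) (w : K -> R).
Variables (n : nat) (P : R) (xn : 'I_n -> K -> 'I_1 -> R).
Hypothesis xn_static : forall t k, xn t k ord0 = w k / P.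

Lemma exp_violation_static :
  exp_violation (fun => 1) prob xn =
  iid_expect prob (n := n) (fun s => Num.max 0 ((\sum_t w (s t)) / P - n%:R)).
Proof.
apply: eq_iid_expect => s; rewrite big_ord1 sqrtr_sqr ger0_norm ?le_max ?lexx //.
rewrite mulr1 mulr_suml; congr (Num.max 0 (_ - _)).
by apply: eq_bigr => t _; apply: xn_static.
Qed.

Hypothesis prob_ge0 : forall k, 0 <= prob k.
Hypothesis w_gt0 : forall k, 0 < w k.
Hypothesis n_gt0 : (0 < n)%N.
Hypothesis P_gt0 : 0 < P.

(* Against the proportional allocation, user t loses w_t ln(nP/W). *)
Lemma exp_regret_static_ge :
  iid_expect prob (n := n) (fun s => (\sum_t w (s t)) * (1 - (\sum_t w (s t)) / (n%:R * P))) <=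
  exp_regret (fun => 1) prob w (fun _ _ => 1) xn.
Proof.
apply: ler_iid_expect => // s; set W := \sum_t w (s t); set q := n%:R * P.
have W_gt0 : 0 < W.
  apply: lt_le_trans (w_gt0 (s (Ordinal n_gt0))) _.
  by rewrite /W (bigD1 (Ordinal n_gt0)) //= lerDl sumr_ge0 // => t _; rewrite ltW.
have q_gt0 : 0 < q by rewrite mulr_gt0 ?ltr0n.
apply: le_trans (lerB (EG_opt_single_ge n_gt0 (fun t => w_gt0 (s t))) (lexx _)).
have -> : \sum_t w (s t) * ln (n%:R * w (s t) / W) - \sum_t w (s t) * ln (\sum_j 1 * xn t (s t) j)
          = W * ln (q / W).
  rewrite -sumrB /W mulr_suml; apply: eq_bigr => t _.
  rewrite big_ord1 mul1r xn_static -mulrBr -ln_div ?posrE ?divr_gt0 ?mulr_gt0 ?ltr0n //.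
  by congr (_ * ln _); rewrite /q; field; rewrite !gt_eqF.
by rewrite ler_wpM2l ?(ltW W_gt0) // -[W / q]invf_div ln_ge_subrV ?divr_gt0.
Qed.

End StaticPrice.

Section FairMarket.
Context {R : realType}.

Definition fair_budget (b : bool) : R := if b then 2 else 1.

Lemma fair_budget_gt0 b : 0 < fair_budget b.
Proof. by case: b; rewrite /fair_budget /=; lra. Qed.

Lemma sum_fair_budget n (s : {ffun 'I_n -> bool}) :
  \sum_t fair_budget (s t) = n%:R * (3 / 2) + walk s.
Proof.
rewrite /walk (eq_bigr (fun t => 3 / 2 + half_step (s t))) => [|t _].
  by rewrite big_split /= sumr_const card_ord (mulr_natl (3 / 2 : R) n).
by rewrite /fair_budget /half_step; case: (s t) => /=; lra.
Qed.

Variables (n : nat) (P : R) (xn : 'I_n -> bool -> 'I_1 -> R).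
Hypothesis P_gt0 : 0 < P.
Hypothesis xn_static : forall t k, xn t k ord0 = fair_budget k / P.

Lemma fair_regret_ge : (0 < n)%N ->
  n%:R * (3 / 2) - ((n%:R * (3 / 2)) ^+ 2 + n%:R / 4) / (n%:R * P) <=
  exp_regret (fun => 1) fair_coin fair_budget (fun _ _ => 1) xn.
Proof.
move=> n_gt0; set mu := n%:R * (3 / 2); set q := n%:R * P.
have q_gt0 : 0 < q by rewrite mulr_gt0 ?ltr0n.
apply: le_trans _ (exp_regret_static_ge xn_static fair_coin_ge0 fair_budget_gt0 n_gt0 P_gt0).
rewrite (eq_iid_expect fair_coin
  (g := fun s => (mu - mu ^+ 2 / q) + (1 - 2 * mu / q) * walk s + (- q^-1) * walk s ^+ 2)).
  rewrite !iid_expectD !(iid_expect_cst fair_coin_sum1) !iid_expectZ.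
  by rewrite iid_expect_walk iid_expect_walk2 -/q; lra.
by move=> s; rewrite sum_fair_budget -/mu -/q; field; rewrite gt_eqF.
Qed.

(* Pointwise, (Y + 3n/2 - nP)_+ >= Y_+ - b = (|Y| + Y)/2 - b. *)
Lemma fair_violation_ge b : 0 <= b -> n%:R * P - n%:R * (3 / 2) <= b ->
  (iid_expect fair_coin (n := n) (fun s => `|walk s|) / 2 - b) / P <=
  exp_violation (fun => 1) fair_coin xn.
Proof.
move=> b_ge0 b_ge; rewrite (exp_violation_static _ xn_static).
have -> : (iid_expect fair_coin (n := n) (fun s => `|walk s|) / 2 - b) / P =
    iid_expect fair_coin (n := n)
      (fun s => - (b / P) + (2 * P)^-1 * `|walk s| + (2 * P)^-1 * walk s).
  rewrite !iid_expectD (iid_expect_cst fair_coin_sum1) !iid_expectZ iid_expect_walk.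
  by field; rewrite gt_eqF.
apply: (ler_iid_expect fair_coin_ge0) => s; rewrite sum_fair_budget le_max.
have bP_ge0 : 0 <= b / P := divr_ge0 b_ge0 (ltW P_gt0).
have [walk_ge0 | walk_lt0] := lerP 0 (walk (R := R) s).
- rewrite ger0_norm // orbC.
  have -> : - (b / P) + (2 * P)^-1 * walk s + (2 * P)^-1 * walk s = (walk s - b) / P.
    by field; rewrite gt_eqF.
  have -> : (n%:R * (3 / 2) + walk s) / P - n%:R = (n%:R * (3 / 2) + walk s - n%:R * P) / P.
    by field; rewrite gt_eqF.
  by rewrite ler_pM2r ?invr_gt0 //; lra.
- rewrite ltr0_norm //.
  have -> : - (b / P) + (2 * P)^-1 * - walk s + (2 * P)^-1 * walk s = - (b / P).
    by field; rewrite gt_eqF.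
  by rewrite oppr_le0 bP_ge0.
Qed.

End FairMarket.

Section MarketArithmetic.
Variable F : realFieldType.

Lemma low_price_violation_ge (n s P e : F) :
  64 <= s -> s ^+ 2 = n -> 0 < P -> n * P - n * (3 / 2) <= s / 64 -> s / 16 <= e ->
  256^-1 * s <= (e / 2 - s / 64) / P.
Proof.
move=> s_ge64 sK P_gt0 price_low e_ge.
have n_ge : 64 * s <= n by rewrite -sK expr2 ler_wpM2r //; lra.
have P_le2 : P <= 2.
  rewrite leNgt; apply/negP => P_gt2.
  have : n * 2 < n * P by rewrite ltr_pM2l //; lra.
  lra.
rewrite ler_pdivlMr //.
have : 256^-1 * s * P <= 256^-1 * s * 2 by rewrite ler_wpM2l //; lra.
lra.
Qed.

Lemma high_price_regret_ge (n s q : F) :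
  64 <= s -> s ^+ 2 = n -> s / 64 < q - n * (3 / 2) ->
  256^-1 * s <= n * (3 / 2) - ((n * (3 / 2)) ^+ 2 + n / 4) / q.
Proof.
move=> s_ge64 sK price_high; set mu := n * (3 / 2).
have n_ge : 64 * s <= n by rewrite -sK expr2 ler_wpM2r //; lra.
have q_gt0 : 0 < q by rewrite /mu in price_high; lra.
have -> : mu - (mu ^+ 2 + n / 4) / q = (mu * (q - mu) - n / 4) / q.
  by field; rewrite gt_eqF.
rewrite ler_pdivlMr //.
have [q_le | q_gt] := lerP q (3 * n).
- have : s * q <= s * (3 * n) by rewrite ler_wpM2l //; lra.
  have : mu * (s / 64) <= mu * (q - mu) by rewrite ler_wpM2l /mu //; lra.
  have : 64 * n <= s * n by rewrite ler_wpM2r //; lra.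
  rewrite /mu; lra.
- have : mu * (q / 2) <= mu * (q - mu) by rewrite ler_wpM2l /mu //; lra.
  have : s * q <= n * q by rewrite ler_wpM2r //; lra.
  have : n <= n * q by rewrite -[X in X <= _]mulr1 ler_wpM2l //; lra.
  rewrite /mu; lra.
Qed.
End MarketArithmetic.

Theorem theorem1 (R : realType) :
  exists (m : nat) (d : 'I_m -> R) (K : finType) (prob : K -> R)
         (w : K -> R) (u : K -> 'I_m -> R),
    (forall j, 0 < d j) /\
    (forall k, 0 < prob k) /\ \sum_k prob k = 1 /\
    (forall k, 0 < w k) /\ (forall k j, 0 <= u k j) /\
    (forall k, exists j, 0 < u k j) /\
    forall (p : nat -> 'I_m -> R)
           (x : forall n : nat, 'I_n -> K -> 'I_m -> R),
      (forall n (t : 'I_n) k, optimal_bundle (p n) (w k) (u k) (x n t k)) ->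
      exists C : R, 0 < C /\ exists N : nat, forall n : nat, (N <= n)%N ->
        C * Num.sqrt (n%:R) <= exp_regret d prob w u (x n) \/
        C * Num.sqrt (n%:R) <= exp_violation d prob (x n).
Proof.
exists 1%N, (fun => 1), bool, fair_coin, fair_budget, (fun _ _ => 1).
split; first by move=> _; lra.
split; first by move=> b; rewrite /fair_coin; lra.
split; first exact: fair_coin_sum1.
split; first exact: fair_budget_gt0.
split; first by move=> _ _; lra.
split; first by move=> _; exists ord0; lra.
move=> p x x_opt; exists 256^-1; split; first by rewrite invr_gt0.
exists 4096%N => n n_ge; have n_gt0 : (0 < n)%N by apply: leq_trans n_ge.
have [P_gt0 _] := optimal_bundle_single (fair_budget_gt0 true) (x_opt n (Ordinal n_gt0) true).
have x_static t k : x n t k ord0 = fair_budget k / p n ord0.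
  by have [_ ->] := optimal_bundle_single (fair_budget_gt0 k) (x_opt n t k).
set s := Num.sqrt n%:R.
have sK : s ^+ 2 = n%:R by rewrite sqr_sqrtr ?ler0n.
have s_ge64 : 64 <= s by rewrite -ler_sqr ?nnegrE ?sqrtr_ge0 // sK -natrX ler_nat.
have [price_low | price_high] := lerP (n%:R * p n ord0 - n%:R * (3 / 2)) (s / 64).
- right; have b_ge0 : 0 <= s / 64 by rewrite divr_ge0 ?(le_trans _ s_ge64).
  apply: le_trans (fair_violation_ge P_gt0 x_static b_ge0 price_low).
  exact: low_price_violation_ge s_ge64 sK P_gt0 price_low (iid_expect_norm_walk_ge n_gt0).
- left; apply: le_trans (fair_regret_ge P_gt0 x_static n_gt0).
  exact: high_price_regret_ge s_ge64 sK price_high.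
Qed.
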